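(* Let $\kappa>0$ and define $g:\mathbb{R}\to\mathbb{R}$ by $g(t)=\sqrt{1-\kappa t^2}$ if $0\leq t<\sqrt{1/(3\kappa)}$, $g(t)=\frac{1}{3\sqrt{2\kappa}\,t}+\sqrt{\frac16}$ if $t\geq\sqrt{1/(3\kappa)}$, and $g(t)=g(-t)$ for $t<0$. Let $G(t)=\int_0^t g(s)\,ds$ and let $G^{-1}$ denote its inverse function. Then: (1) $\lim_{t\to0}\frac{G^{-1}(t)}{t}=1$; (2) $\lim_{t\to\infty}\frac{G^{-1}(t)}{t}=\sqrt6$; (3) $t\leq G^{-1}(t)\leq\sqrt6\,t$ for all $t\geq0$; (4) $-\frac12\leq \frac{t}{g(t)}g'(t)\leq 0$ for all $t\geq 0$.
   Context: The function $g$ is $C^1$, even, takes values in $(\sqrt{1/6},1]$, and $G$ is a strictly increasing odd $C^2$ bijection of $\mathbb{R}$. *)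

From Stdlib Require Import Reals.
From Coquelicot Require Import Coquelicot.
Open Scope R_scope.

Definition g_pos (kappa t : R) : R :=
  if Rlt_dec t (sqrt (1 / (3 * kappa)))
  then sqrt (1 - kappa * t ^ 2)
  else 1 / (3 * sqrt (2 * kappa) * t) + sqrt (1 / 6).

Definition g (kappa t : R) : R :=
  if Rle_dec 0 t then g_pos kappa t else g_pos kappa (- t).

Definition G (kappa t : R) : R := RInt (g kappa) 0 t.

From Stdlib Require Import Reals Lra Psatz.
From Coquelicot Require Import Coquelicot.
Open Scope R_scope.

(* Since sqrt(1/6) <= g <= 1, the mean value G(x)/x lies in [sqrt(1/6), 1], which gives
   (3) after substituting x = G^-1(t).  Moreover G(x)/x -> G'(0) = g(0) = 1 as x -> 0, and
   G(x)/x -> sqrt(1/6) as x -> oo because g -> sqrt(1/6) and G(x)/x is an average of g;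
   as G^-1(t) tends to 0, resp. oo, with t, inverting these limits gives (1) and (2).
   For (4), the two branches of g meet at sqrt(1/(3 kappa)) with equal value and slope,
   and t g'(t)/g(t) equals -kappa t^2/(1 - kappa t^2) on the first branch and
   -(g(t) - sqrt(1/6))/g(t) on the second; both lie in [-1/2, 0]. *)

Lemma RInt_between (f : R -> R) (u v lo hi : R) :
  u <= v -> ex_RInt f u v -> (forall s, u < s < v -> lo <= f s <= hi) ->
  lo * (v - u) <= RInt f u v <= hi * (v - u).
Proof.
  intros Huv Hf Hb.
  assert (Hc : forall c, RInt (fun _ => c) u v = c * (v - u)).
  { intros c. rewrite RInt_const. cbn. unfold mult; simpl. ring. }
  rewrite <- !Hc. split; apply RInt_le; auto using ex_RInt_const; apply Hb.
Qed.

Lemma is_lim_diff_quotient (f : R -> R) (x l : R) :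
  is_derive f x l -> is_lim (fun y => (f y - f x) / (y - x)) x l.
Proof.
  rewrite is_derive_Reals. intros Hf. apply is_lim_spec. intros eps.
  destruct (Hf eps (cond_pos eps)) as [d Hd]. exists d. intros y Hy Hyx.
  unfold ball in Hy; simpl in Hy; unfold AbsRing_ball, abs, minus, plus, opp in Hy; simpl in Hy.
  replace y with (x + (y - x)) at 1 by ring. apply Hd; auto. lra.
Qed.

Lemma is_lim_RInt_mean_pinfty (f : R -> R) (l : R) :
  (forall u v, ex_RInt f u v) -> is_lim f p_infty l ->
  is_lim (fun x => RInt f 0 x / x) p_infty l.
Proof.
  intros Hint Hf. apply is_lim_spec in Hf. apply is_lim_spec. intros eps.
  pose proof (cond_pos eps) as Heps.
  destruct (Hf (pos_div_2 eps)) as [M HM]; simpl in HM.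
  set (M1 := Rmax 0 M + 1).
  assert (HM1 : 0 < M1 /\ M < M1).
  { pose proof (Rmax_l 0 M). pose proof (Rmax_r 0 M). unfold M1. lra. }
  set (C := Rabs (RInt f 0 M1 - l * M1)).
  exists (Rmax M1 (2 * C / eps)). intros x Hx.
  pose proof (Rmax_l M1 (2 * C / eps)) as HxM1. pose proof (Rmax_r M1 (2 * C / eps)) as HxC.
  assert (HC : C < eps * x / 2).
  { apply Rmult_lt_reg_r with (2 / eps); [apply Rdiv_lt_0_compat; lra|].
    replace (eps * x / 2 * (2 / eps)) with x by (field; lra).
    replace (C * (2 / eps)) with (2 * C / eps) by (field; lra). lra. }
  assert (Htail : Rabs (RInt f M1 x - l * (x - M1)) <= eps / 2 * (x - M1)).
  { assert (Hb : (l - eps / 2) * (x - M1) <= RInt f M1 x <= (l + eps / 2) * (x - M1)).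
    { apply RInt_between; auto; try lra. intros s Hs.
      specialize (HM s ltac:(lra)). apply Rabs_def2 in HM. lra. }
    apply Rabs_le. nra. }
  assert (Hsplit : RInt f 0 x = RInt f 0 M1 + RInt f M1 x)
    by (rewrite <- (RInt_Chasles f 0 M1 x) by auto; reflexivity).
  rewrite Hsplit.
  replace ((RInt f 0 M1 + RInt f M1 x) / x - l)
    with (((RInt f 0 M1 - l * M1) + (RInt f M1 x - l * (x - M1))) / x) by (field; lra).
  unfold Rdiv. rewrite Rabs_mult, Rabs_inv, (Rabs_right x) by lra.
  apply Rmult_lt_reg_r with x; [lra|]. rewrite Rmult_assoc, Rinv_l, Rmult_1_r by lra.
  pose proof (Rabs_triang (RInt f 0 M1 - l * M1) (RInt f M1 x - l * (x - M1))).
  assert (0 < eps * M1) by nra. unfold C in HC. lra.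
Qed.

Lemma is_derive_glue (f f1 f2 : R -> R) (x l d : R) : 0 < d ->
  (forall y, x - d < y <= x -> f y = f1 y) -> (forall y, x <= y < x + d -> f y = f2 y) ->
  is_derive f1 x l -> is_derive f2 x l -> is_derive f x l.
Proof.
  rewrite !is_derive_Reals. intros Hd E1 E2 H1 H2 eps Heps.
  destruct (H1 eps Heps) as [d1 P1]. destruct (H2 eps Heps) as [d2 P2].
  assert (Hd' : 0 < Rmin d (Rmin d1 d2)) by (repeat apply Rmin_pos; try apply cond_pos; lra).
  exists (mkposreal _ Hd'). simpl. intros h Hh0 Hh.
  pose proof (Rmin_l d (Rmin d1 d2)). pose proof (Rmin_r d (Rmin d1 d2)).
  pose proof (Rmin_l d1 d2). pose proof (Rmin_r d1 d2).
  destruct (Rlt_dec h 0).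
  - rewrite Rabs_left in Hh by lra.
    rewrite (E1 (x + h)), (E1 x) by lra. apply P1; auto. rewrite Rabs_left; lra.
  - rewrite Rabs_right in Hh by lra.
    rewrite (E2 (x + h)), (E2 x) by lra. apply P2; auto. rewrite Rabs_right; lra.
Qed.

Lemma is_lim_0_of_Rabs_le (f : R -> R) (c : R) :
  (forall t, Rabs (f t) <= c * Rabs t) -> is_lim f 0 0.
Proof.
  intros Hf. apply is_lim_spec. intros eps.
  pose proof (cond_pos eps). pose proof (Rabs_pos c). pose proof (Rle_abs c).
  assert (Hd : 0 < eps / (Rabs c + 1)) by (apply Rdiv_lt_0_compat; lra).
  exists (mkposreal _ Hd). intros t Ht _. simpl in *.
  unfold ball in Ht; simpl in Ht; unfold AbsRing_ball, abs, minus, plus, opp in Ht; simpl in Ht.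
  rewrite Ropp_0, Rplus_0_r in Ht. rewrite Rminus_0_r.
  pose proof (Hf t). pose proof (Rabs_pos t).
  assert (Rabs t * (Rabs c + 1) < eps).
  { apply Rmult_lt_reg_r with (/ (Rabs c + 1)); [apply Rinv_0_lt_compat; lra|].
    rewrite Rmult_assoc, Rinv_r by lra. lra. }
  nra.
Qed.

Lemma is_lim_inverse_div (F Finv : R -> R) (x0 y0 : Rbar) (l : R) :
  (forall t, F (Finv t) = t) -> F 0 = 0 -> l <> 0 ->
  is_lim (fun x => F x / x) y0 l -> is_lim Finv x0 y0 ->
  Rbar_locally' x0 (fun t => t <> 0 /\ Finite (Finv t) <> y0) ->
  is_lim (fun t => Finv t / t) x0 (/ l).
Proof.
  intros HF HF0 Hl HFl HFinv Hloc.
  assert (Hne : forall t, t <> 0 -> Finv t <> 0).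
  { intros t Ht E. apply Ht. rewrite <- (HF t), E. exact HF0. }
  assert (Hcomp : is_lim (fun t => F (Finv t) / Finv t) x0 l).
  { apply (is_lim_comp (fun x => F x / x) Finv x0 l y0); auto.
    revert Hloc. apply filter_imp. tauto. }
  assert (Hinv : is_lim (fun t => / (F (Finv t) / Finv t)) x0 (/ l)).
  { apply (is_lim_inv _ _ l Hcomp). intro E. apply Hl. injection E. auto. }
  apply (is_lim_ext_loc (fun t => / (F (Finv t) / Finv t))); [|exact Hinv].
  revert Hloc. apply filter_imp. intros t [Ht _]. rewrite HF. field. auto.
Qed.

Section Profile.

Variable k : R.
Hypothesis Hk : 0 < k.

Let tc := sqrt (1 / (3 * k)).
Let ginf := sqrt (1 / 6).

Definition g_in (t : R) : R := sqrt (1 - k * t ^ 2).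
Definition g_out (t : R) : R := 1 / (3 * sqrt (2 * k) * t) + ginf.

Lemma tc_pos : 0 < tc.
Proof. apply sqrt_lt_R0, Rdiv_lt_0_compat; lra. Qed.

Lemma k_tc_sq : k * tc ^ 2 = 1 / 3.
Proof. unfold tc. rewrite pow2_sqrt by (apply Rlt_le, Rdiv_lt_0_compat; lra). field. lra. Qed.

Lemma ginf_pos : 0 < ginf.
Proof. apply sqrt_lt_R0. lra. Qed.

Lemma ginf_sq : ginf ^ 2 = 1 / 6.
Proof. apply pow2_sqrt. lra. Qed.

Lemma sqrt6_ginf : sqrt 6 = / ginf.
Proof. unfold ginf. rewrite Rdiv_1_l, sqrt_inv, Rinv_inv. reflexivity. Qed.

Lemma g_out_tc : g_out tc = 2 * ginf.
Proof.
  pose proof tc_pos. assert (Hs2 : 0 < sqrt (2 * k)) by (apply sqrt_lt_R0; lra).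
  unfold g_out. enough (1 / (3 * sqrt (2 * k) * tc) = ginf) by lra.
  symmetry. apply sqrt_lem_1; [lra | apply Rlt_le, Rdiv_lt_0_compat; [lra | nra] |].
  replace (1 / (3 * sqrt (2 * k) * tc) * (1 / (3 * sqrt (2 * k) * tc)))
    with (1 / (9 * sqrt (2 * k) ^ 2 * (k * tc ^ 2) / k)) by (field; nra).
  rewrite pow2_sqrt, k_tc_sq by lra. field. lra.
Qed.

Lemma g_in_tc : g_in tc = 2 * ginf.
Proof.
  pose proof ginf_pos. unfold g_in. rewrite k_tc_sq.
  apply sqrt_lem_1; try lra. replace (2 * ginf * (2 * ginf)) with (4 * ginf ^ 2) by ring.
  rewrite ginf_sq. field.
Qed.

Lemma g_abs (t : R) : g k t = g_pos k (Rabs t).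
Proof.
  unfold g. destruct (Rle_dec 0 t).
  - rewrite Rabs_right by lra. reflexivity.
  - rewrite Rabs_left by lra. reflexivity.
Qed.

Lemma g_opp (t : R) : g k (- t) = g k t.
Proof. rewrite !g_abs, Rabs_Ropp. reflexivity. Qed.

Lemma g_outer (t : R) : tc <= Rabs t -> g k t = g_out (Rabs t).
Proof. intros Ht. rewrite g_abs. unfold g_pos. fold tc. destruct (Rlt_dec _ tc); [lra | reflexivity]. Qed.

Lemma g_inner (t : R) : Rabs t <= tc -> g k t = g_in t.
Proof.
  intros Ht. destruct (Req_dec (Rabs t) tc) as [E|].
  - rewrite g_outer, E, g_out_tc by lra. unfold g_in. rewrite <- pow2_abs, E.
    symmetry. apply g_in_tc.
  - rewrite g_abs. unfold g_pos. fold tc. destruct (Rlt_dec _ tc); [|lra].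
    unfold g_in. rewrite pow2_abs. reflexivity.
Qed.

Lemma k_sq_le (t : R) : Rabs t <= tc -> 0 <= k * t ^ 2 <= 1 / 3.
Proof.
  intros Ht. pose proof k_tc_sq. pose proof (Rabs_pos t). rewrite <- pow2_abs.
  split; [nra|]. assert (Rabs t ^ 2 <= tc ^ 2) by (simpl; nra). nra.
Qed.

Lemma g_in_sq (t : R) : Rabs t <= tc -> g_in t ^ 2 = 1 - k * t ^ 2.
Proof. intros Ht. pose proof (k_sq_le t Ht). apply pow2_sqrt. lra. Qed.

Lemma g_in_bounds (t : R) : Rabs t <= tc -> ginf <= g_in t <= 1.
Proof.
  intros Ht. pose proof (k_sq_le t Ht). pose proof (g_in_sq t Ht).
  pose proof ginf_pos. pose proof ginf_sq. pose proof (sqrt_pos (1 - k * t ^ 2)).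
  fold (g_in t) in *. split; nra.
Qed.

Lemma g_out_bounds (t : R) : tc <= t -> ginf < g_out t <= 2 * ginf.
Proof.
  intros Ht. pose proof tc_pos. pose proof g_out_tc.
  assert (Hs2 : 0 < sqrt (2 * k)) by (apply sqrt_lt_R0; lra).
  unfold g_out in *.
  assert (0 < 1 / (3 * sqrt (2 * k) * t)) by (apply Rdiv_lt_0_compat; nra).
  enough (1 / (3 * sqrt (2 * k) * t) <= 1 / (3 * sqrt (2 * k) * tc)) by lra.
  apply Rmult_le_compat_l; [lra|]. apply Rinv_le_contravar; nra.
Qed.

Lemma g_bounds (t : R) : ginf <= g k t <= 1.
Proof.
  destruct (Rle_dec (Rabs t) tc).
  - rewrite g_inner by auto. apply g_in_bounds. auto.
  - pose proof ginf_sq. pose proof ginf_pos. rewrite g_outer by lra.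
    pose proof (g_out_bounds (Rabs t) ltac:(lra)). nra.
Qed.

Lemma is_derive_g_in (t : R) : Rabs t <= tc -> is_derive g_in t (- (k * t) / g_in t).
Proof.
  intros Ht. pose proof (k_sq_le t Ht). pose proof (g_in_bounds t Ht). pose proof ginf_pos.
  unfold g_in in *. auto_derive; [simpl in *; lra|].
  replace (1 + - (k * (t * (t * 1)))) with (1 - k * t ^ 2) by ring. field. lra.
Qed.

Lemma is_derive_g_out (t : R) : 0 < t -> is_derive g_out t (- (g_out t - ginf) / t).
Proof.
  intros Ht. assert (Hs2 : 0 < sqrt (2 * k)) by (apply sqrt_lt_R0; lra).
  unfold g_out. auto_derive; [nra|]. field. lra.
Qed.

Lemma is_derive_g_inner (t : R) : Rabs t < tc -> is_derive (g k) t (- (k * t) / g_in t).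
Proof.
  intros Ht. apply (is_derive_ext_loc g_in); [|apply is_derive_g_in; lra].
  apply Rabs_def2 in Ht. apply (locally_interval _ t (- tc) tc); simpl; try lra.
  intros y Hy1 Hy2. symmetry. apply g_inner, Rabs_le. lra.
Qed.

Lemma is_derive_g_outer (t : R) : tc < t -> is_derive (g k) t (- (g_out t - ginf) / t).
Proof.
  intros Ht. pose proof tc_pos. apply (is_derive_ext_loc g_out); [|apply is_derive_g_out; lra].
  apply (locally_interval _ t tc p_infty); simpl; auto.
  intros y Hy _. rewrite g_outer; rewrite Rabs_right; auto; lra.
Qed.

Lemma is_derive_g_tc : is_derive (g k) tc (- (k * tc) / g_in tc).
Proof.
  pose proof tc_pos. pose proof ginf_pos. pose proof k_tc_sq. pose proof ginf_sq.
  apply (is_derive_glue _ g_in g_out tc _ tc); auto.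
  - intros y Hy. apply g_inner, Rabs_le. lra.
  - intros y Hy. rewrite g_outer; rewrite Rabs_right; auto; lra.
  - apply is_derive_g_in. rewrite Rabs_right; lra.
  - replace (- (k * tc) / g_in tc) with (- (g_out tc - ginf) / tc).
    + apply is_derive_g_out. lra.
    + rewrite g_in_tc, g_out_tc. field_simplify_eq; [nra | lra].
Qed.

Lemma ex_derive_g (t : R) : ex_derive (g k) t.
Proof.
  assert (Hpos : forall t, 0 <= t -> ex_derive (g k) t).
  { clear t. intros t Ht. destruct (Rtotal_order t tc) as [Hlt | [-> | Hgt]].
    - eexists. apply is_derive_g_inner. rewrite Rabs_right; lra.
    - eexists. apply is_derive_g_tc.
    - eexists. apply is_derive_g_outer. lra. }
  destruct (Rle_dec 0 t); auto.
  apply (ex_derive_ext (fun y => g k (- y))); [apply g_opp|].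
  apply ex_derive_comp; [apply Hpos; lra | auto_derive; auto].
Qed.

Lemma ex_RInt_g (u v : R) : ex_RInt (g k) u v.
Proof.
  apply (@ex_RInt_continuous R_CompleteNormedModule). intros z _.
  apply (@ex_derive_continuous R_AbsRing R_NormedModule), ex_derive_g.
Qed.

Lemma G_0 : G k 0 = 0.
Proof. unfold G. rewrite RInt_point. reflexivity. Qed.

Lemma G_mul_id_bounds (x : R) : ginf * (x * x) <= G k x * x <= x * x.
Proof.
  pose proof ginf_pos. unfold G. destruct (Rle_dec 0 x) as [Hx | Hx].
  - pose proof (RInt_between (g k) 0 x ginf 1 Hx (ex_RInt_g _ _) (fun s _ => g_bounds s)). nra.
  - pose proof (RInt_between (g k) x 0 ginf 1 ltac:(lra) (ex_RInt_g _ _) (fun s _ => g_bounds s)).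
    assert (Hswap : RInt (g k) 0 x = - RInt (g k) x 0)
      by (rewrite <- opp_RInt_swap by apply ex_RInt_g; reflexivity).
    rewrite Hswap. nra.
Qed.

Lemma Rabs_le_G (x : R) : Rabs x <= sqrt 6 * Rabs (G k x).
Proof.
  pose proof ginf_pos. pose proof (G_mul_id_bounds x).
  assert (Hx : ginf * Rabs x <= Rabs (G k x)).
  { destruct (Req_dec x 0) as [->|Hx0]; [rewrite G_0, Rabs_R0; lra|].
    pose proof (Rabs_pos_lt x Hx0). pose proof (Rle_abs (G k x * x)).
    assert (Hxx : x * x = Rabs x * Rabs x)
      by (rewrite <- Rabs_mult; symmetry; apply Rabs_pos_eq; nra).
    rewrite Rabs_mult, Hxx in *. nra. }
  rewrite sqrt6_ginf. apply Rmult_le_reg_l with ginf; auto.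
  rewrite <- Rmult_assoc, Rinv_r, Rmult_1_l; lra.
Qed.

Lemma G_inverse_bounds (x t : R) : G k x = t -> 0 <= t -> t <= x <= sqrt 6 * t.
Proof.
  intros Hxt Ht. pose proof ginf_pos. pose proof (G_mul_id_bounds x) as Hb. rewrite Hxt in Hb.
  assert (Hx : 0 <= x).
  { destruct (Rle_dec 0 x) as [|Hneg]; auto. exfalso.
    assert (0 < ginf * (x * x)) by (apply Rmult_lt_0_compat; nra). nra. }
  destruct (Rle_lt_or_eq_dec 0 x Hx) as [Hxp | <-].
  - rewrite sqrt6_ginf. split; [nra|].
    apply Rmult_le_reg_l with ginf; auto. rewrite <- Rmult_assoc, Rinv_r, Rmult_1_l; nra.
  - rewrite G_0 in Hxt. subst t. rewrite Rmult_0_r. lra.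
Qed.

Lemma is_lim_G_div_0 : is_lim (fun x => G k x / x) 0 1.
Proof.
  assert (HD : is_derive (G k) 0 (g k 0)).
  { apply (is_derive_RInt (g k) (G k) 0 0).
    - apply filter_forall. intros b. unfold G.
      apply (@RInt_correct R_CompleteNormedModule), ex_RInt_g.
    - apply (@ex_derive_continuous R_AbsRing R_NormedModule), ex_derive_g. }
  assert (Hg0 : g k 0 = 1).
  { pose proof tc_pos. rewrite g_inner by (rewrite Rabs_R0; lra).
    unfold g_in. replace (1 - k * 0 ^ 2) with 1 by ring. apply sqrt_1. }
  rewrite Hg0 in HD. apply (is_lim_ext (fun y => (G k y - G k 0) / (y - 0))).
  - intros y. rewrite G_0. f_equal; ring.
  - apply is_lim_diff_quotient. exact HD.
Qed.

Lemma is_lim_g_pinfty : is_lim (g k) p_infty ginf.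
Proof.
  pose proof tc_pos. assert (Hs2 : 0 < sqrt (2 * k)) by (apply sqrt_lt_R0; lra).
  apply (is_lim_ext_loc g_out).
  { exists tc. intros t Ht. rewrite g_outer; rewrite Rabs_right; auto; lra. }
  replace ginf with (0 + ginf) by ring. apply is_lim_plus'; [|apply is_lim_const].
  apply (is_lim_ext (fun y => / (3 * sqrt (2 * k) * y))); [intros y; unfold Rdiv; ring|].
  change (Finite 0) with (Rbar_inv p_infty). apply is_lim_inv; [|discriminate].
  replace p_infty with (Rbar_mult (3 * sqrt (2 * k)) p_infty) at 2.
  - apply is_lim_scal_l, is_lim_id.
  - simpl. destruct (Rle_dec 0 _) as [Hle|]; [|lra].
    destruct (Rle_lt_or_eq_dec 0 _ Hle); [reflexivity | lra].
Qed.

Lemma is_lim_G_div_pinfty : is_lim (fun x => G k x / x) p_infty ginf.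
Proof. exact (is_lim_RInt_mean_pinfty (g k) ginf ex_RInt_g is_lim_g_pinfty). Qed.

Lemma g_in_elasticity_bounds (t : R) : Rabs t <= tc ->
  -1/2 <= t / g_in t * (- (k * t) / g_in t) <= 0.
Proof.
  intros Ht. pose proof (k_sq_le t Ht). pose proof (g_in_bounds t Ht). pose proof ginf_pos.
  replace (t / g_in t * (- (k * t) / g_in t)) with (- (k * t ^ 2) / g_in t ^ 2) by (field; lra).
  rewrite g_in_sq by auto.
  split; apply Rmult_le_reg_r with (1 - k * t ^ 2); try lra; field_simplify; lra.
Qed.

Lemma g_out_elasticity_bounds (t : R) : tc <= t ->
  -1/2 <= t / g_out t * (- (g_out t - ginf) / t) <= 0.
Proof.
  intros Ht. pose proof tc_pos. pose proof ginf_pos. pose proof (g_out_bounds t Ht).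
  replace (t / g_out t * (- (g_out t - ginf) / t)) with (- (g_out t - ginf) / g_out t)
    by (field; lra).
  split; apply Rmult_le_reg_r with (g_out t); try lra; field_simplify; lra.
Qed.

Lemma g_elasticity_bounds (t : R) : 0 <= t -> -1/2 <= t / g k t * Derive (g k) t <= 0.
Proof.
  intros Ht. destruct (Rtotal_order t tc) as [Hlt | [-> | Hgt]].
  - assert (Hat : Rabs t <= tc) by (rewrite Rabs_right; lra).
    rewrite (is_derive_unique _ _ _ (is_derive_g_inner t ltac:(rewrite Rabs_right; lra))).
    rewrite g_inner by auto. apply g_in_elasticity_bounds. auto.
  - pose proof tc_pos. assert (Hat : Rabs tc <= tc) by (rewrite Rabs_right; lra).
    rewrite (is_derive_unique _ _ _ is_derive_g_tc), g_inner by auto.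
    apply g_in_elasticity_bounds. auto.
  - rewrite (is_derive_unique _ _ _ (is_derive_g_outer t Hgt)), g_outer, Rabs_right
      by (try rewrite Rabs_right; lra).
    apply g_out_elasticity_bounds. lra.
Qed.

End Profile.

Theorem lemma2p1 (kappa : R) (Hk : 0 < kappa)
  (Ginv : R -> R) (HGinv : forall t : R, G kappa (Ginv t) = t) :
  is_lim (fun t => Ginv t / t) 0 1 /\
  is_lim (fun t => Ginv t / t) p_infty (sqrt 6) /\
  (forall t : R, 0 <= t -> t <= Ginv t <= sqrt 6 * t) /\
  (forall t : R, 0 <= t ->
     -1/2 <= t / g kappa t * Derive (g kappa) t <= 0).
Proof.
  assert (Hbounds : forall t, 0 <= t -> t <= Ginv t <= sqrt 6 * t)
    by (intros t Ht; apply (G_inverse_bounds kappa Hk); auto).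
  split; [|split; [|split]]; auto using g_elasticity_bounds.
  - rewrite <- Rinv_1.
    apply (is_lim_inverse_div (G kappa) Ginv 0 0); auto using G_0, R1_neq_R0, is_lim_G_div_0.
    + apply (is_lim_0_of_Rabs_le _ (sqrt 6)). intros t.
      rewrite <- (HGinv t) at 2. apply Rabs_le_G; auto.
    + exists (mkposreal 1 Rlt_0_1). intros t _ Ht. split; auto. intro E. apply Ht.
      rewrite <- (HGinv t). injection E as ->. apply G_0; auto.
  - rewrite sqrt6_ginf.
    apply (is_lim_inverse_div (G kappa) Ginv p_infty p_infty); auto using G_0, is_lim_G_div_pinfty.
    + apply Rgt_not_eq, ginf_pos.
    + apply (is_lim_le_p_loc (fun t => t)); [|apply is_lim_id].
      exists 0. intros t Ht. apply Hbounds. lra.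
    + exists 0. intros t Ht. split; [lra | discriminate].
Qed.
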